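(* Let $0<\alpha<1$, $\lambda\in\mathbb{R}$, $\tau>0$, and let $\{v^n\}_{n=0}^{\infty}$ be a real sequence, with the convention $v^{-1}=0$. Then for every integer $n\ge0$, $$v^{n}\delta_{t}^{\alpha,\lambda}v^n \geq \frac{1}{2} e^{ -\frac{\alpha}{2}\lambda\tau}\delta_{t}^{\alpha,2\lambda} (v^n)^2 +\frac{e^{- \frac{\alpha}{2}\lambda\tau}}{2l_0^{\alpha}} \tau^{\alpha}(\delta_{t}^{\alpha,\lambda}v^n)^2,$$ $$v^{n-1}\delta_{t}^{\alpha,\lambda}v^n \geq \frac{1}{2} e^{(1- \frac{\alpha}{2})\lambda\tau} \delta_{t}^{\alpha,2\lambda} (v^n)^2-\frac{e^{(1- \frac{\alpha}{2})\lambda\tau}}{2(l_0^{\alpha}-l_1^{\alpha})}\tau^{\alpha} (\delta_{t}^{\alpha,\lambda}v^n)^2.$$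
   Context: $g_k^{\alpha}=(-1)^k\binom{\alpha}{k}$ are the coefficients of $(1-z)^{\alpha}=\sum_{k\ge0}g_k^{\alpha}z^k$, and for a constant $\mu$, $g_k^{\alpha,\mu}=e^{-(k-\frac{\alpha}{2})\mu\tau}g_k^{\alpha}$. For a sequence $\{w^n\}$, $\delta_t^{\alpha,\mu}w^n=\tau^{-\alpha}\sum_{k=0}^{n}g_k^{\alpha,\mu}w^{n-k}$; in particular $\delta_{t}^{\alpha,2\lambda}(v^n)^2=\tau^{-\alpha}\sum_{k=0}^{n}g_{k}^{\alpha,2\lambda}(v^{n-k})^2$. Also $l_n^{\alpha}=\sum_{k=0}^n g_k^{\alpha}$, so $l_0^{\alpha}=1$ and $l_1^{\alpha}=1-\alpha$. *)

From Stdlib Require Import Reals.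
Open Scope R_scope.

Fixpoint gbinom (a : R) (k : nat) : R :=
  match k with
  | O => 1
  | S m => gbinom a m * (a - INR m) / (INR m + 1)
  end.

(* g_k^a = (-1)^k binom(a,k) : coefficients of (1-z)^a *)
Definition gcoef (a : R) (k : nat) : R := (-1) ^ k * gbinom a k.

Definition gcoef_mu (a mu tau : R) (k : nat) : R :=
  exp (- (INR k - a / 2) * mu * tau) * gcoef a k.

Definition delta_t (a mu tau : R) (w : nat -> R) (n : nat) : R :=
  Rpower tau (- a) * sum_f_R0 (fun k => gcoef_mu a mu tau k * w (n - k)%nat) n.

Definition lcoef (a : R) (n : nat) : R := sum_f_R0 (gcoef a) n.

Definition vprev (v : nat -> R) (n : nat) : R :=
  match n with O => 0 | S m => v m end.

(* Substituting u^j = e^{j lambda tau} v^j turns delta_t^{alpha,lambda} v^n and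
   delta_t^{alpha,2 lambda} (v^n)^2 into positive multiples of the Grünwald-Letnikov sums
   D = sum_k g_k u^{n-k} and S = sum_k g_k (u^{n-k})^2, which reduces both inequalities
   to lambda = 0.  There D = u^n - T and S = (u^n)^2 - Q, where T and Q average the past
   values against the weights -g_k (k >= 1); these are nonnegative with total mass
   1 - l_n <= 1, so Cauchy-Schwarz gives T^2 <= Q, which is exactly the first
   inequality.  For the second one the weight -g_1 = alpha of u^{n-1} is split off: the
   remaining weights have mass at most 1 - alpha, and Cauchy-Schwarz for them makes the
   quadratic form in (u^n, u^{n-1}) nonnegative. *)

From Stdlib Require Import Reals.
From Stdlib Require Import Lra Lia Psatz.
Open Scope R_scope.

Lemma sum_f_R0_first (F : nat -> R) n :
  sum_f_R0 F n = F 0%nat + sum_f_R0 (fun i => match i with O => 0 | S _ => F i end) n.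
Proof. induction n as [|n IH]; simpl in *; [ring | rewrite IH; ring]. Qed.

Lemma two_mul_le_of_sq_le (C Q A y : R) :
  0 <= C -> 0 <= Q -> A ^ 2 <= C * Q -> 2 * A * y <= C * y ^ 2 + Q.
Proof.
  intros HC HQ HAQ. destruct (Req_dec C 0) as [->|HC0].
  - assert (A = 0) by nra. subst. nra.
  - assert (0 <= (C * y - A) ^ 2) by apply pow2_ge_0. nra.
Qed.

Lemma weighted_cauchy_schwarz (c y : nat -> R) n :
  (forall i, 0 <= c i) ->
  (sum_f_R0 (fun i => c i * y i) n) ^ 2
  <= sum_f_R0 c n * sum_f_R0 (fun i => c i * y i ^ 2) n.
Proof.
  intros Hc. induction n as [|n IH].
  - specialize (Hc 0%nat). simpl. nra.
  - rewrite !tech5.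
    set (A := sum_f_R0 (fun i => c i * y i) n) in *.
    set (C := sum_f_R0 c n) in *.
    set (Q := sum_f_R0 (fun i => c i * y i ^ 2) n) in *.
    assert (HC : 0 <= C) by (apply cond_pos_sum; exact Hc).
    assert (HQ : 0 <= Q).
    { apply cond_pos_sum; intros i. specialize (Hc i).
      assert (0 <= y i ^ 2) by apply pow2_ge_0. nra. }
    pose proof (two_mul_le_of_sq_le C Q A (y (S n)) HC HQ IH).
    specialize (Hc (S n)).
    assert (0 <= c (S n) * (C * y (S n) ^ 2 + Q - 2 * A * y (S n))) by nra.
    nra.
Qed.

Lemma gcoef_0 a : gcoef a 0 = 1.
Proof. unfold gcoef; simpl; ring. Qed.

Lemma gcoef_succ a k : gcoef a (S k) = gcoef a k * (INR k - a) / (INR k + 1).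
Proof. unfold gcoef; simpl; unfold Rdiv; ring. Qed.

Lemma gcoef_1 a : gcoef a 1 = - a.
Proof. rewrite gcoef_succ, gcoef_0; simpl; field. Qed.

Lemma gcoef_succ_nonpos a k : 0 < a < 1 -> gcoef a (S k) <= 0.
Proof.
  intros Ha. induction k as [|k IH].
  - rewrite gcoef_1; lra.
  - rewrite gcoef_succ, S_INR. pose proof (pos_INR k).
    assert (0 < / (INR k + 1 + 1)) by (apply Rinv_0_lt_compat; lra).
    assert (gcoef a (S k) * (INR k + 1 - a) <= 0) by nra.
    unfold Rdiv; nra.
Qed.

Lemma lcoef_0 a : lcoef a 0 = 1.
Proof. apply gcoef_0. Qed.

Lemma lcoef_0_sub_1 a : lcoef a 0 - lcoef a 1 = a.
Proof. unfold lcoef; simpl; rewrite gcoef_0, gcoef_1; ring. Qed.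

(* Telescoping: [(n+1) g_{n+1} = (n - a) g_n] makes [a l_n + (n+1) g_{n+1}] constant. *)
Lemma lcoef_mul a n : lcoef a n * a = - (INR n + 1) * gcoef a (S n).
Proof.
  induction n as [|n IH].
  - unfold lcoef; simpl; rewrite gcoef_1, gcoef_0; ring.
  - unfold lcoef in *; simpl sum_f_R0.
    rewrite Rmult_plus_distr_r, IH, (gcoef_succ a (S n)), !S_INR.
    field. pose proof (pos_INR n); lra.
Qed.

Lemma lcoef_nonneg a n : 0 < a < 1 -> 0 <= lcoef a n.
Proof.
  intros Ha. pose proof (lcoef_mul a n). pose proof (gcoef_succ_nonpos a n Ha).
  pose proof (pos_INR n). assert (0 <= lcoef a n * a) by nra. nra.
Qed.

Definition gl_sum (a : R) (w : nat -> R) (n : nat) : R :=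
  sum_f_R0 (fun k => gcoef a k * w (n - k)%nat) n.

Definition gl_memory (a : R) (w : nat -> R) (m : nat) : R :=
  sum_f_R0 (fun i => - gcoef a (S i) * w (m - i)%nat) m.

Lemma gl_sum_ext a (w w' : nat -> R) n :
  (forall j, (j <= n)%nat -> w j = w' j) -> gl_sum a w n = gl_sum a w' n.
Proof. intros Hw. apply sum_eq; intros k Hk. rewrite Hw by lia. reflexivity. Qed.

Lemma gl_sum_0 a w : gl_sum a w 0 = w 0%nat.
Proof. unfold gl_sum; simpl; rewrite gcoef_0; ring. Qed.

Lemma gl_sum_succ a w m : gl_sum a w (S m) = w (S m) - gl_memory a w m.
Proof.
  unfold gl_sum, gl_memory. rewrite decomp_sum by lia. simpl pred.
  rewrite gcoef_0, Nat.sub_0_r.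
  replace (sum_f_R0 (fun i => - gcoef a (S i) * w (m - i)%nat) m)
    with (-1 * sum_f_R0 (fun i => gcoef a (S i) * w (S m - S i)%nat) m)
    by (rewrite scal_sum; apply sum_eq; intros i _; simpl; ring).
  ring.
Qed.

Lemma gl_memory_weights a m :
  sum_f_R0 (fun i => - gcoef a (S i)) m = 1 - lcoef a (S m).
Proof.
  unfold lcoef. rewrite (decomp_sum _ (S m)) by lia. simpl pred.
  rewrite gcoef_0.
  replace (sum_f_R0 (fun i => - gcoef a (S i)) m)
    with (-1 * sum_f_R0 (fun i => gcoef a (S i)) m)
    by (rewrite scal_sum; apply sum_eq; intros i _; ring).
  ring.
Qed.

Section GrunwaldLetnikovEnergy.

Variable a : R.
Hypothesis Ha : 0 < a < 1.

Lemma gl_memory_sq_le w m :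
  gl_memory a w m ^ 2 <= gl_memory a (fun j => w j ^ 2) m.
Proof.
  assert (Hc : forall i, 0 <= - gcoef a (S i))
    by (intros i; pose proof (gcoef_succ_nonpos a i Ha); lra).
  pose proof (weighted_cauchy_schwarz _ (fun i => w (m - i)%nat) m Hc) as HCS.
  rewrite gl_memory_weights in HCS. cbv beta in HCS.
  fold (gl_memory a w m) (gl_memory a (fun j => w j ^ 2) m) in HCS.
  pose proof (lcoef_nonneg a (S m) Ha).
  assert (0 <= gl_memory a (fun j => w j ^ 2) m).
  { apply cond_pos_sum; intros i. specialize (Hc i).
    assert (0 <= w (m - i)%nat ^ 2) by apply pow2_ge_0. nra. }
  nra.
Qed.

(* Splitting off the first memory weight [-g_1 = a] leaves weights of total mass at most [1 - a]. *)
Lemma gl_memory_shift_sq_le w m :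
  (gl_memory a w m - a * w m) ^ 2
  <= (1 - a) * (gl_memory a (fun j => w j ^ 2) m - a * w m ^ 2).
Proof.
  set (c := fun i => match i with O => 0 | S _ => - gcoef a (S i) end).
  assert (Hc : forall i, 0 <= c i).
  { intros [|i]; simpl; [lra | pose proof (gcoef_succ_nonpos a (S i) Ha); lra]. }
  assert (Hsplit : forall f, gl_memory a f m - a * f m = sum_f_R0 (fun i => c i * f (m - i)%nat) m).
  { intros f. unfold gl_memory. rewrite sum_f_R0_first, gcoef_1, Nat.sub_0_r.
    ring_simplify. apply sum_eq; intros [|i] _; simpl; ring. }
  assert (Hmass : sum_f_R0 c m = 1 - lcoef a (S m) - a).
  { rewrite <- gl_memory_weights, (sum_f_R0_first (fun i => - gcoef a (S i))), gcoef_1.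
    fold c. ring. }
  rewrite !Hsplit.
  pose proof (weighted_cauchy_schwarz c (fun i => w (m - i)%nat) m Hc) as HCS.
  rewrite Hmass in HCS. cbv beta in HCS.
  pose proof (lcoef_nonneg a (S m) Ha).
  assert (0 <= sum_f_R0 (fun i => c i * w (m - i)%nat ^ 2) m).
  { apply cond_pos_sum; intros i. specialize (Hc i).
    assert (0 <= w (m - i)%nat ^ 2) by apply pow2_ge_0. nra. }
  nra.
Qed.

Lemma gl_sum_energy w n :
  w n * gl_sum a w n >= gl_sum a (fun j => w j ^ 2) n / 2 + gl_sum a w n ^ 2 / 2.
Proof.
  destruct n as [|m].
  - rewrite !gl_sum_0. nra.
  - rewrite !gl_sum_succ. pose proof (gl_memory_sq_le w m). nra.
Qed.

Lemma gl_sum_energy_prev w n :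
  vprev w n * gl_sum a w n
  >= gl_sum a (fun j => w j ^ 2) n / 2 - gl_sum a w n ^ 2 / (2 * a).
Proof.
  apply Rle_ge, (Rmult_le_reg_l (2 * a)); [lra|].
  replace (2 * a * (gl_sum a (fun j => w j ^ 2) n / 2 - gl_sum a w n ^ 2 / (2 * a)))
    with (a * gl_sum a (fun j => w j ^ 2) n - gl_sum a w n ^ 2) by (field; lra).
  destruct n as [|m]; simpl vprev.
  - rewrite !gl_sum_0. nra.
  - rewrite !gl_sum_succ. pose proof (gl_memory_shift_sq_le w m) as H.
    set (x := w (S m)) in *. set (y := w m) in *.
    set (T := gl_memory a w m) in *. set (Q := gl_memory a (fun j => w j ^ 2) m) in *.
    (* The defect, multiplied by [1 - a], is a square plus [a] times the slack in [H]. *)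
    assert (Hid : (1 - a) * (2 * a * (y * (x - T)) - (a * (x ^ 2 - Q) - (x - T) ^ 2))
      = ((1 - a) * x - (T - a * y)) ^ 2
        + a * ((1 - a) * (Q - a * y ^ 2) - (T - a * y) ^ 2)) by ring.
    assert (0 <= ((1 - a) * x - (T - a * y)) ^ 2) by apply pow2_ge_0.
    assert (0 <= a * ((1 - a) * (Q - a * y ^ 2) - (T - a * y) ^ 2))
      by (apply Rmult_le_pos; lra).
    assert (0 <= 2 * a * (y * (x - T)) - (a * (x ^ 2 - Q) - (x - T) ^ 2)).
    { apply (Rmult_le_reg_l (1 - a)); lra. }
    lra.
Qed.

End GrunwaldLetnikovEnergy.

Lemma delta_t_gl_sum a mu tau w n :
  delta_t a mu tau w n =
  Rpower tau (- a) * exp (a / 2 * mu * tau) * exp (- INR n * mu * tau)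
  * gl_sum a (fun j => exp (INR j * mu * tau) * w j) n.
Proof.
  unfold delta_t, gl_sum. rewrite !scal_sum. apply sum_eq; intros k Hk. unfold gcoef_mu.
  rewrite minus_INR by lia.
  replace (- (INR k - a / 2) * mu * tau)
    with (a / 2 * mu * tau + (- INR n * mu * tau + (INR n - INR k) * mu * tau)) by ring.
  rewrite !exp_plus. ring.
Qed.

Lemma exp_double x : exp (x + x) = exp x ^ 2.
Proof. rewrite exp_plus. ring. Qed.

Lemma delta_t_sq_gl_sum a mu tau w n :
  delta_t a (2 * mu) tau (fun j => w j ^ 2) n =
  Rpower tau (- a) * exp (a / 2 * mu * tau) ^ 2 * exp (- INR n * mu * tau) ^ 2
  * gl_sum a (fun j => (exp (INR j * mu * tau) * w j) ^ 2) n.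
Proof.
  rewrite delta_t_gl_sum, <- !exp_double.
  replace (a / 2 * (2 * mu) * tau) with (a / 2 * mu * tau + a / 2 * mu * tau) by ring.
  replace (- INR n * (2 * mu) * tau) with (- INR n * mu * tau + - INR n * mu * tau) by ring.
  f_equal. apply gl_sum_ext; intros j _.
  replace (INR j * (2 * mu) * tau) with (INR j * mu * tau + INR j * mu * tau) by ring.
  rewrite exp_double. ring.
Qed.

Lemma vprev_weighted mu tau v n :
  vprev v n
  = / exp (INR n * mu * tau) * exp (mu * tau)
    * vprev (fun j => exp (INR j * mu * tau) * v j) n.
Proof.
  destruct n as [|m]; simpl vprev; [ring|].
  rewrite S_INR.
  replace ((INR m + 1) * mu * tau) with (mu * tau + INR m * mu * tau) by ring.
  rewrite exp_plus. field. split; apply Rgt_not_eq, exp_pos.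
Qed.

Section DeltaEnergy.

Variables (a lambda tau : R) (v : nat -> R) (n : nat).
Hypothesis Ha : 0 < a < 1.

Let u := fun j => exp (INR j * lambda * tau) * v j.
Let E := exp (a / 2 * lambda * tau).
Let G := exp (INR n * lambda * tau).
Let P := Rpower tau a.

Lemma delta_t_energy_decomp :
  delta_t a lambda tau v n = / P * E * / G * gl_sum a u n
  /\ delta_t a (2 * lambda) tau (fun j => v j ^ 2) n
     = / P * E ^ 2 * / G ^ 2 * gl_sum a (fun j => u j ^ 2) n.
Proof.
  rewrite delta_t_sq_gl_sum, delta_t_gl_sum, Rpower_Ropp.
  replace (- INR n * lambda * tau) with (- (INR n * lambda * tau)) by ring.
  rewrite exp_Ropp, pow_inv.
  split; reflexivity.
Qed.

Lemma delta_t_energy :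
  v n * delta_t a lambda tau v n >=
    / 2 * exp (- (a / 2) * lambda * tau) * delta_t a (2 * lambda) tau (fun j => v j ^ 2) n
    + exp (- (a / 2) * lambda * tau) / 2 * P * delta_t a lambda tau v n ^ 2.
Proof.
  destruct delta_t_energy_decomp as [-> ->].
  pose proof (gl_sum_energy a Ha u n) as Hu.
  set (D := gl_sum a u n) in *. set (S := gl_sum a (fun j => u j ^ 2) n) in *.
  assert (HP : 0 < P) by apply exp_pos.
  assert (HE : 0 < E) by apply exp_pos.
  assert (HG : 0 < G) by apply exp_pos.
  replace (v n) with (/ G * u n) by (unfold u, G; field; apply Rgt_not_eq, exp_pos).
  replace (exp (- (a / 2) * lambda * tau)) with (/ E)
    by (unfold E; rewrite <- exp_Ropp; f_equal; ring).
  match goal with |- ?L >= ?M =>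
    assert (Hdiff : L - M = E / (P * G ^ 2) * (u n * D - (S / 2 + D ^ 2 / 2)))
      by (field; lra) end.
  assert (0 <= E / (P * G ^ 2)).
  { apply Rlt_le, Rdiv_lt_0_compat; [lra | apply Rmult_lt_0_compat; nra]. }
  assert (0 <= E / (P * G ^ 2) * (u n * D - (S / 2 + D ^ 2 / 2)))
    by (apply Rmult_le_pos; lra).
  lra.
Qed.

Lemma delta_t_energy_prev :
  vprev v n * delta_t a lambda tau v n >=
    / 2 * exp ((1 - a / 2) * lambda * tau) * delta_t a (2 * lambda) tau (fun j => v j ^ 2) n
    - exp ((1 - a / 2) * lambda * tau) / (2 * a) * P * delta_t a lambda tau v n ^ 2.
Proof.
  destruct delta_t_energy_decomp as [-> ->].
  pose proof (gl_sum_energy_prev a Ha u n) as Hu.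
  set (D := gl_sum a u n) in *. set (S := gl_sum a (fun j => u j ^ 2) n) in *.
  set (p := vprev u n) in *.
  set (Z := exp (lambda * tau)).
  assert (HP : 0 < P) by apply exp_pos.
  assert (HE : 0 < E) by apply exp_pos.
  assert (HG : 0 < G) by apply exp_pos.
  assert (HZ : 0 < Z) by apply exp_pos.
  rewrite (vprev_weighted lambda tau). fold G Z. fold u p.
  replace (exp ((1 - a / 2) * lambda * tau)) with (Z * / E)
    by (unfold Z, E; rewrite <- exp_Ropp, <- exp_plus; f_equal; ring).
  match goal with |- ?L >= ?M =>
    assert (Hdiff : L - M = Z * E / (P * G ^ 2) * (p * D - (S / 2 - D ^ 2 / (2 * a))))
      by (field; lra) end.
  assert (0 <= Z * E / (P * G ^ 2)).
  { apply Rlt_le, Rdiv_lt_0_compat; [nra | apply Rmult_lt_0_compat; nra]. }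
  assert (0 <= Z * E / (P * G ^ 2) * (p * D - (S / 2 - D ^ 2 / (2 * a))))
    by (apply Rmult_le_pos; lra).
  lra.
Qed.

End DeltaEnergy.

Theorem lemma4p1 (alpha lambda tau : R) (v : nat -> R) :
  0 < alpha < 1 -> 0 < tau ->
  forall n : nat,
    v n * delta_t alpha lambda tau v n >=
      / 2 * exp (- (alpha / 2) * lambda * tau)
          * delta_t alpha (2 * lambda) tau (fun j => (v j) ^ 2) n
      + exp (- (alpha / 2) * lambda * tau) / (2 * lcoef alpha 0)
          * Rpower tau alpha * (delta_t alpha lambda tau v n) ^ 2
    /\
    vprev v n * delta_t alpha lambda tau v n >=
      / 2 * exp ((1 - alpha / 2) * lambda * tau)
          * delta_t alpha (2 * lambda) tau (fun j => (v j) ^ 2) n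
      - exp ((1 - alpha / 2) * lambda * tau) / (2 * (lcoef alpha 0 - lcoef alpha 1))
          * Rpower tau alpha * (delta_t alpha lambda tau v n) ^ 2.
Proof.
  (* [Rpower tau alpha] is [exp (alpha * ln tau)], positive whatever [tau] is. *)
  intros Ha _ n.
  rewrite lcoef_0_sub_1, lcoef_0, Rmult_1_r.
  split.
  - exact (delta_t_energy alpha lambda tau v n Ha).
  - exact (delta_t_energy_prev alpha lambda tau v n Ha).
Qed.
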